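(* The $\mathbb{F}$-dual of every $A$-code (of every length) is an $A$-code if and only if either $m=1$, or $m=2$ and $f(x)=x^2+ax-1$ for some $a\in\mathbb{F}$, or $m\ge2$ and $f(x)=x^m\pm1$.
   Context: Let $\mathbb{F}$ be a finite field, $f(x)\in\mathbb{F}[x]$ monic of degree $m$, $A=\mathbb{F}[x]/\langle f(x)\rangle$, elements identified with polynomials of degree $<m$. An $A$-code of length $l$ is an $A$-submodule of $A^l$. Identify $g(x)=\sum_{i=0}^{m-1}a_ix^i\in A$ with the vector $(a_0,\ldots,a_{m-1})\in\mathbb{F}^m$, and $(g_1,\ldots,g_l)\in A^l$ with the concatenation of the vectors of $g_1,\ldots,g_l$ in $\mathbb{F}^{lm}$. Under this identification an $A$-code $C$ is an $\mathbb{F}$-linear code of length $lm$, and its $\mathbb{F}$-dual $C^{\perp_{\mathbb{F}}}$ is its dual with respect to the standard dot product on $\mathbb{F}^{lm}$, viewed again as a subset of $A^l$; it is an $A$-code if it is an $A$-submodule of $A^l$. *)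

From HB Require Import structures.
From mathcomp Require Import all_boot all_order all_algebra.
Set Implicit Arguments. Unset Strict Implicit. Unset Printing Implicit Defensive.
Import GRing.Theory.
Local Open Scope ring_scope.

(* A = F[x]/<f>, m = deg f.  An element of A^l is encoded as an l x m matrix
   over F: row i holds the coefficient vector (a_0,...,a_{m-1}) of the i-th
   component g_i = sum_j a_j x^j.  Flattening row by row gives the vector in
   F^(l m) of the paper. *)

Section ACodes.
Variables (F : finFieldType) (m : nat) (f : {poly F}).

Definition poly_of_row (l : nat) (c : 'M[F]_(l, m)) (i : 'I_l) : {poly F} :=
  \sum_(j < m) c i j *: 'X^j.

Definition amul (l : nat) (g : {poly F}) (c : 'M[F]_(l, m)) : 'M[F]_(l, m) :=
  \matrix_(i < l, j < m) ((g * poly_of_row c i) %% f)`_j.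

(* C is an A-submodule of A^l, elements of A being the polynomials of
   degree < m *)
Definition is_Acode (l : nat) (C : {set 'M[F]_(l, m)}) : Prop :=
  [/\ 0 \in C,
      (forall c d, c \in C -> d \in C -> c + d \in C) &
      (forall (g : {poly F}) c, (size g <= m)%N -> c \in C -> amul g c \in C)].

Definition dotw (l : nat) (c d : 'M[F]_(l, m)) : F :=
  \sum_(i < l) \sum_(j < m) c i j * d i j.

Definition Fdual (l : nat) (C : {set 'M[F]_(l, m)}) : {set 'M[F]_(l, m)} :=
  [set d | [forall c in C, dotw c d == 0]].

End ACodes.

From HB Require Import structures.
From mathcomp Require Import all_boot all_order all_algebra.
From mathcomp Require Import ring zify.
Set Implicit Arguments. Unset Strict Implicit. Unset Printing Implicit Defensive.
Import GRing.Theory.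
Local Open Scope ring_scope.

(* Identify A with F^m through coefficients, so that multiplication by x is the
   companion matrix M of f.  If x has an adjoint in A for the dot product, i.e.
   some q with <u, x w> = <q u, w>, then so has every g in A, and the F-dual of
   any A-submodule is again stable under A.  Conversely, the F-dual of the graph
   {(u, x u)} in A^2 is {(-M^T w, w)}; its stability under x forces
   M M^T = M^T M, and the first column of this identity leaves only the three
   shapes of f, for each of which x has the explicit adjoint -f_0, x or
   +-x^(m-1). *)

Section Adjoints.
Variables (F : fieldType) (m : nat) (f : {poly F}).
Hypotheses (f_monic : f \is monic) (size_f : size f = m.+1) (m_gt0 : (0 < m)%N).
Implicit Types (g h p q u w : {poly F}).

Definition dotp u w := \sum_(k < m) u`_k * w`_k.

Lemma dotpC u w : dotp u w = dotp w u.
Proof. by apply: eq_bigr => k _; rewrite mulrC. Qed.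

Lemma dotpDl u v w : dotp (u + v) w = dotp u w + dotp v w.
Proof. by rewrite /dotp -big_split; apply: eq_bigr => k _; rewrite coefD mulrDl. Qed.

Lemma dotpZl a u w : dotp (a *: u) w = a * dotp u w.
Proof. by rewrite /dotp mulr_sumr; apply: eq_bigr => k _; rewrite coefZ mulrA. Qed.

Lemma dotp0l w : dotp 0 w = 0.
Proof. by rewrite -(scale0r 0) dotpZl mul0r. Qed.

Lemma dotpNl u w : dotp (- u) w = - dotp u w.
Proof. by rewrite -scaleN1r dotpZl mulN1r. Qed.

Lemma dotpBl u v w : dotp (u - v) w = dotp u w - dotp v w.
Proof. by rewrite dotpDl dotpNl. Qed.

Lemma dotpDr u v w : dotp w (u + v) = dotp w u + dotp w v.
Proof. by rewrite dotpC dotpDl !(dotpC w). Qed.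

Lemma dotpZr a u w : dotp w (a *: u) = a * dotp w u.
Proof. by rewrite dotpC dotpZl dotpC. Qed.

Lemma dotp0r w : dotp w 0 = 0.
Proof. by rewrite dotpC dotp0l. Qed.

Lemma dotpNr u w : dotp w (- u) = - dotp w u.
Proof. by rewrite dotpC dotpNl dotpC. Qed.

Lemma dotpBr u v w : dotp w (u - v) = dotp w u - dotp w v.
Proof. by rewrite dotpC dotpBl !(dotpC w). Qed.

Lemma dotpXnl i u : (i < m)%N -> dotp 'X^i u = u`_i.
Proof.
move=> lt_im; rewrite /dotp (bigD1 (Ordinal lt_im)) //= coefXn eqxx mul1r.
rewrite big1 ?addr0 // => j /eqP neq_ji; rewrite coefXn.
by case: eqP => [eq_ji|]; [case: neq_ji; apply: val_inj | rewrite mul0r].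
Qed.

Lemma dotpXnr i u : (i < m)%N -> dotp u 'X^i = u`_i.
Proof. by move=> lt_im; rewrite dotpC dotpXnl. Qed.

Lemma poly_expand u : (size u <= m)%N -> u = \sum_(i < m) u`_i *: 'X^i.
Proof.
move=> size_u; rewrite -poly_def; apply/polyP => i; rewrite coef_poly.
by case: ltnP => // le_mi; rewrite nth_default // (leq_trans size_u).
Qed.

Lemma size_modf p : (size (p %% f)%R <= m)%N.
Proof. by rewrite -ltnS -size_f ltn_modp -size_poly_gt0 size_f. Qed.

Lemma modf_small p : (size p <= m)%N -> p %% f = p.
Proof. by move=> size_p; rewrite modp_small // size_f ltnS. Qed.

Lemma modf_mull g h : (g %% f * h) %% f = (g * h) %% f.
Proof. by rewrite mulrC modp_mul mulrC. Qed.

Lemma modf_mulX w : (size w <= m)%N -> ('X * w) %% f = w * 'X - w`_m.-1 *: f.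
Proof.
move=> size_w.
have -> : 'X * w = (w`_m.-1)%:P * f + (w * 'X - w`_m.-1 *: f).
  by rewrite mul_polyC addrC subrK mulrC.
have f_m : f`_m = 1 by have := monicP f_monic; rewrite /lead_coef size_f.
rewrite modp_addl_mul_small // size_f ltnS; apply/leq_sizeP => j le_mj.
rewrite coefB coefMX coefZ; case: (ltngtP j m) => [|lt_mj|->].
- by rewrite ltnNge le_mj.
- have j_gt0 : (0 < j)%N by apply: leq_ltn_trans lt_mj.
  rewrite gtn_eqF // [f`_j]nth_default ?size_f // mulr0 subr0 nth_default //.
  by rewrite (leq_trans size_w) // -ltnS prednK.
- by rewrite f_m mulr1 -(prednK m_gt0) /= subrr.
Qed.

Definition trmulX w := drop_poly 1 w - dotp f w *: 'X^(m.-1).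

Lemma size_trmulX w : (size w <= m)%N -> (size (trmulX w) <= m)%N.
Proof.
move=> size_w; rewrite /trmulX (leq_trans (size_polyD _ _)) // geq_max size_polyN.
rewrite size_drop_poly (leq_trans (leq_subr _ _)) //=.
by rewrite (leq_trans (size_scale_leq _ _)) // size_polyXn prednK.
Qed.

Lemma coef_trmulX_last w : (size w <= m)%N -> (trmulX w)`_m.-1 = - dotp f w.
Proof.
move=> size_w; rewrite coefB coef_drop_poly coefZ coefXn eqxx mulr1 addn1 prednK //.
by rewrite nth_default // sub0r.
Qed.

Lemma dotp_mulX_trmulX u w : (size u <= m)%N -> (size w <= m)%N ->
  dotp (('X * u) %% f) w = dotp u (trmulX w).
Proof.
move=> size_u size_w; rewrite modf_mulX // dotpBl dotpZl /trmulX dotpBr dotpZr.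
rewrite dotpXnr ?prednK // [_ * u`_m.-1]mulrC; congr (_ - _).
rewrite /dotp -(prednK m_gt0) big_ord_recl big_ord_recr /= coefMX eqxx mul0r add0r.
rewrite coef_drop_poly [w`_(_ + 1)]nth_default ?addn1 ?prednK // mulr0 addr0.
by apply: eq_bigr => i _; rewrite coefMX coef_drop_poly addn1.
Qed.

Definition adjoint g g' := forall u w, (size u <= m)%N -> (size w <= m)%N ->
  dotp u ((g * w) %% f) = dotp ((g' * u) %% f) w.

Lemma adjointM g g' h h' : adjoint g g' -> adjoint h h' -> adjoint (g * h) (h' * g').
Proof.
move=> adj_g adj_h u w size_u size_w.
by rewrite -mulrA -modp_mul adj_g ?size_modf // adj_h ?size_modf // modp_mul mulrA.
Qed.

Lemma adjointD g g' h h' : adjoint g g' -> adjoint h h' -> adjoint (g + h) (g' + h').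
Proof.
move=> adj_g adj_h u w size_u size_w.
by rewrite mulrDl modpD dotpDr adj_g // adj_h // -dotpDl -modpD -mulrDl.
Qed.

Lemma adjointC c : adjoint c%:P c%:P.
Proof. by move=> u w su sw; rewrite !mul_polyC !modpZl !modf_small // dotpZr dotpZl. Qed.

Lemma adjoint_modf g g' : adjoint g g' -> adjoint g (g' %% f).
Proof. by move=> adj_g u w su sw; rewrite adj_g // modf_mull. Qed.

Lemma adjointX_all q : adjoint 'X q -> forall g, exists g', adjoint g g'.
Proof.
move=> adj_X; elim/poly_ind => [|g c [g' adj_g]].
  by exists 0 => u w _ _; rewrite !mul0r mod0p dotp0r dotp0l.
by exists (q * g' + c%:P); apply: adjointD; [apply: adjointM | apply: adjointC].
Qed.

Lemma adjointX_coef q :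
    (forall i w, (i < m)%N -> (size w <= m)%N ->
       (('X * w) %% f)`_i = dotp ((q * 'X^i) %% f) w) ->
  adjoint 'X q.
Proof.
move=> adj_coef u w size_u size_w.
rewrite {2}(poly_expand size_u) mulr_sumr (big_morph _ (@modpD _ f) (@mod0p _ f)).
rewrite (big_morph _ (fun u v => dotpDl u v w) (dotp0l w)).
by apply: eq_bigr => i _; rewrite -scalerAr modpZl dotpZl -adj_coef.
Qed.

Lemma adjointX_m1 : m = 1%N -> adjoint 'X (- f`_0)%:P.
Proof.
move=> m1; apply: adjointX_coef => i w lt_im size_w.
have -> : i = 0%N by move: lt_im; rewrite m1; case: i.
rewrite modf_mulX // expr0 mulr1 modf_small; last by rewrite size_polyC (leq_trans (leq_b1 _)).
rewrite -[_%:P]mulr1 mul_polyC -(expr0 'X) dotpZl dotpXnl //.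
by rewrite coefB coefMX coefZ m1 /= sub0r mulNr mulrC.
Qed.

Lemma adjointX_m2 a : m = 2%N -> f = 'X^2 + a *: 'X - 1 -> adjoint 'X 'X.
Proof.
move=> m2 f_def.
have f_0 : f`_0 = -1 by rewrite f_def coefB coefD coefXn coefZ coefX coef1 mulr0 !add0r.
have f_1 : f`_1 = a by rewrite f_def coefB coefD coefXn coefZ coefX coef1 mulr1 add0r subr0.
have size_X : (size ('X : {poly F}) <= m)%N by rewrite size_polyX m2.
apply: adjointX_coef => i w; rewrite m2 => lt_i2 size_w.
rewrite modf_mulX ?m2 // coefB coefMX coefZ.
case: i lt_i2 => [|[|//]] _ /=.
  by rewrite expr0 mulr1 modf_small // -(expr1 'X) dotpXnl ?m2 // f_0 sub0r mulrN1 opprK.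
have -> : 'X * 'X^1 = f + (1 - a *: 'X) :> {poly F} by rewrite f_def expr1 -mul_polyC; ring.
rewrite modpD modpp add0r modf_small; last first.
  rewrite m2 (leq_trans (size_polyD _ _)) // geq_max size_poly1 size_polyN.
  by rewrite (leq_trans (size_scale_leq _ _)) // size_polyX.
by rewrite dotpBl dotpZl -(expr0 'X) dotpXnl ?m2 // -(expr1 'X) dotpXnl ?m2 // f_1 mulrC.
Qed.

Lemma adjointX_binomial e : e * e = 1 -> f = 'X^m - e%:P -> adjoint 'X (e *: 'X^(m.-1)).
Proof.
move=> ee1 f_def.
have f_lt i : (i < m)%N -> f`_i = - (if i == 0%N then e else 0).
  by move=> lt_im; rewrite f_def coefB coefXn coefC ltn_eqF // sub0r.
have lt_m1m : (m.-1 < m)%N by rewrite prednK.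
apply: adjointX_coef => i w lt_im size_w.
rewrite modf_mulX // coefB coefMX coefZ f_lt //.
case: i lt_im => [|k] lt_km /=.
  rewrite expr0 mulr1 modf_small; last by rewrite (leq_trans (size_scale_leq _ _)) // size_polyXn.
  by rewrite dotpZl dotpXnl // sub0r mulrN opprK mulrC.
(* [x^(m-1) x^(k+1) = x^k x^m] and [x^m = e] modulo [f]. *)
have -> : e *: 'X^(m.-1) * 'X^(k.+1) = e *: ('X^k * f + e *: 'X^k) :> {poly F}.
  rewrite -scalerAl -exprD addnS -addSn prednK // addnC exprD f_def.
  by congr (_ *: _); rewrite -mul_polyC; ring.
rewrite modpZl modpD modp_mull add0r modf_small; last first.
  by rewrite (leq_trans (size_scale_leq _ _)) // size_polyXn ltnW.
by rewrite scalerA ee1 scale1r dotpXnl ?oppr0 ?mulr0 ?subr0 // ltnW.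
Qed.

End Adjoints.

Section Classification.
Variables (R : idomainType) (m : nat) (f : {poly R}).
Hypotheses (f_monic : f \is monic) (size_f : size f = m.+1) (m_gt1 : (1 < m)%N).
Hypothesis coef_eq : forall j, (j < m)%N ->
  f`_j * f`_0 = (j == 0%N)%:R - (j == m.-1)%:R * f`_1.

Lemma coef0_sqr : f`_0 ^+ 2 = 1.
Proof.
have := coef_eq (ltnW m_gt1); rewrite eqxx -expr2 => ->.
by rewrite (_ : (0 == m.-1)%N = false) ?mul0r ?subr0 //; lia.
Qed.

Lemma coef0_neq0 : f`_0 != 0.
Proof. by apply: contra_eq_neq coef0_sqr => ->; rewrite expr0n eq_sym oner_eq0. Qed.

Lemma coef_mid j : (0 < j)%N -> (j < m.-1)%N -> f`_j = 0.
Proof.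
move=> j_gt0 lt_jm1; have := coef_eq (leq_trans lt_jm1 (leq_pred m)).
rewrite gtn_eqF // ltn_eqF // mul0r subr0 => /eqP.
by rewrite mulf_eq0 (negbTE coef0_neq0) orbF => /eqP.
Qed.

Lemma coef_last : f`_m.-1 * f`_0 = - f`_1.
Proof.
have := coef_eq (_ : m.-1 < m)%N; rewrite eqxx mul1r => -> //; last by lia.
by rewrite (_ : (m.-1 == 0)%N = false) ?sub0r //; lia.
Qed.

Lemma monic_binomial : (forall j, (0 < j < m)%N -> f`_j = 0) -> f = 'X^m + 1 \/ f = 'X^m - 1.
Proof.
move=> coef_mid0; have f_def : f = 'X^m + (f`_0)%:P.
  apply/polyP => k; rewrite coefD coefXn coefC.
  have f_m : f`_m = 1 by have := monicP f_monic; rewrite /lead_coef size_f.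
  case: (ltngtP k m) => [lt_km|lt_mk|->].
  - by rewrite add0r; case: k lt_km => //= k lt_km; rewrite coef_mid0.
  - by rewrite gtn_eqF ?(leq_ltn_trans _ lt_mk) // nth_default ?size_f // addr0.
  - by rewrite f_m gtn_eqF ?addr0 // ltnW.
have := coef0_sqr; move/eqP; rewrite sqrf_eq1 => /orP[]/eqP f_0.
  by left; rewrite f_def f_0.
by right; rewrite f_def f_0 polyCN.
Qed.

Lemma coef_eq_classify :
  m = 2%N /\ (exists a : R, f = 'X^2 + a *: 'X - 1) \/ f = 'X^m + 1 \/ f = 'X^m - 1.
Proof.
have [m_gt2 | m2] : (2 < m)%N \/ m = 2%N by lia.
  right; apply: monic_binomial => j /andP[j_gt0 lt_jm].
  have [lt_jm1 | ->] : (j < m.-1)%N \/ j = m.-1 by lia.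
    exact: coef_mid.
  have := coef_last; rewrite (@coef_mid 1) //; last by lia.
  by rewrite oppr0 => /eqP; rewrite mulf_eq0 (negbTE coef0_neq0) orbF => /eqP.
have [f_1 | f_1] := eqVneq f`_1 0.
  by right; apply: monic_binomial => j; rewrite m2 => /andP[? ?]; have -> : j = 1%N by lia.
left; split => //; exists f`_1.
have f_0 : f`_0 = -1.
  have := coef_last; rewrite m2 /= => last_eq.
  by apply: (mulfI f_1); rewrite last_eq mulrN1.
have f_2 : f`_2 = 1 by have := monicP f_monic; rewrite /lead_coef size_f m2.
apply/polyP => -[|[|[|k]]]; rewrite coefB coefD coefXn coefZ coefX coef1 /=.
- by rewrite f_0 mulr0 !add0r.
- by rewrite mulr1 add0r subr0.
- by rewrite f_2 mulr0 addr0 subr0.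
- by rewrite mulr0 addr0 subr0 nth_default // size_f m2.
Qed.

End Classification.

Section Codes.
Variables (F : finFieldType) (m : nat) (f : {poly F}).
Hypotheses (f_monic : f \is monic) (size_f : size f = m.+1) (m_gt0 : (0 < m)%N).
Local Notation row := (@poly_of_row F m _).
Local Notation dotp := (dotp m).
Implicit Types (g u w : {poly F}) (c : 'M[F]_(2, m)).

Lemma coef_poly_of_row l (c : 'M[F]_(l, m)) i (k : 'I_m) : (row c i)`_k = c i k.
Proof.
rewrite /poly_of_row coef_sum (bigD1 k) //= coefZ coefXn eqxx mulr1 big1 ?addr0 //.
move=> j /eqP neq_jk; rewrite coefZ coefXn.
by case: eqP => [eq_kj|]; [case: neq_jk; apply: val_inj | rewrite mulr0].
Qed.

Lemma size_poly_of_row l (c : 'M[F]_(l, m)) i : (size (row c i) <= m)%N.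
Proof.
rewrite /poly_of_row (leq_trans (size_sum _ _ _)) //; apply/bigmax_leqP => j _.
by rewrite (leq_trans (size_scale_leq _ _)) // size_polyXn.
Qed.

Lemma dotw_sum_dotp l (c d : 'M[F]_(l, m)) : dotw c d = \sum_i dotp (row c i) (row d i).
Proof. by apply: eq_bigr => i _; apply: eq_bigr => k _; rewrite !coef_poly_of_row. Qed.

Definition mx_of_polys l (p : 'I_l -> {poly F}) : 'M[F]_(l, m) := \matrix_(i, k) (p i)`_k.

Lemma poly_of_row_mx l (p : 'I_l -> {poly F}) i :
  (size (p i) <= m)%N -> row (mx_of_polys p) i = p i.
Proof.
move=> size_p; apply/polyP => k; case: (ltnP k m) => [lt_km | le_mk].
  by rewrite (coef_poly_of_row _ _ (Ordinal lt_km)) mxE.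
by rewrite !nth_default ?(leq_trans (size_poly_of_row _ i)) ?(leq_trans size_p).
Qed.

Lemma poly_of_row_amul l g (c : 'M[F]_(l, m)) i : row (amul f g c) i = (g * row c i) %% f.
Proof.
rewrite (_ : amul f g c = mx_of_polys (fun i => (g * row c i) %% f)) //.
by rewrite poly_of_row_mx // size_modf.
Qed.

Lemma poly_of_row0 l i : row (0 : 'M[F]_(l, m)) i = 0.
Proof. by rewrite /poly_of_row big1 // => j _; rewrite mxE scale0r. Qed.

Lemma poly_of_rowD l (c d : 'M[F]_(l, m)) i : row (c + d) i = row c i + row d i.
Proof. by rewrite /poly_of_row -big_split; apply: eq_bigr => j _; rewrite mxE scalerDl. Qed.

Lemma Fdual_Acode q l (C : {set 'M[F]_(l, m)}) :
  adjoint m f 'X q -> is_Acode f C -> is_Acode f (Fdual C).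
Proof.
move=> adj_X [C0 CD CA]; split.
- rewrite inE; apply/forall_inP => c _; rewrite dotw_sum_dotp big1 // => i _.
  by rewrite poly_of_row0 dotp0r.
- move=> d e; rewrite !inE => /forall_inP dual_d /forall_inP dual_e.
  apply/forall_inP => c Cc; rewrite dotw_sum_dotp.
  under eq_bigr do rewrite poly_of_rowD dotpDr.
  by rewrite big_split /= -!dotw_sum_dotp (eqP (dual_d c Cc)) (eqP (dual_e c Cc)) addr0.
- move=> g d _; rewrite !inE => /forall_inP dual_d; apply/forall_inP => c Cc.
  have [g' /adjoint_modf adj_g] := adjointX_all size_f adj_X g.
  rewrite dotw_sum_dotp.
  under eq_bigr do rewrite poly_of_row_amul adj_g ?size_poly_of_row // -poly_of_row_amul.
  by rewrite -dotw_sum_dotp dual_d // CA // size_modf.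
Qed.

Lemma sum_ord2 (V : nmodType) (G : 'I_2 -> V) : \sum_(i < 2) G i = G ord0 + G ord_max.
Proof. by rewrite big_ord_recl big_ord1; congr (_ + G _); apply: val_inj. Qed.

Definition pair_mx u w := mx_of_polys (fun i : 'I_2 => if i == ord0 then u else w).

Lemma pair_mx_row0 u w : (size u <= m)%N -> row (pair_mx u w) ord0 = u.
Proof. by move=> size_u; rewrite poly_of_row_mx. Qed.

Lemma pair_mx_row1 u w : (size w <= m)%N -> row (pair_mx u w) ord_max = w.
Proof. by move=> size_w; rewrite poly_of_row_mx. Qed.

Definition graph_code : {set 'M[F]_(2, m)} :=
  [set c : 'M[F]_(2, m) | [forall k, c ord_max k == (('X * row c ord0) %% f)`_k]].

Lemma graph_codeP c : reflect (row c ord_max = ('X * row c ord0) %% f) (c \in graph_code).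
Proof.
rewrite inE; apply: (iffP forallP) => [graph_c | graph_c k]; last first.
  by rewrite -coef_poly_of_row graph_c.
apply/polyP => k; case: (ltnP k m) => [lt_km | le_mk].
  by rewrite (coef_poly_of_row _ _ (Ordinal lt_km)) (eqP (graph_c _)).
by rewrite !nth_default ?(leq_trans (size_poly_of_row _ _)) ?(leq_trans (size_modf size_f _)).
Qed.

Lemma graph_code_Acode : is_Acode f graph_code.
Proof.
split.
- by apply/graph_codeP; rewrite !poly_of_row0 mulr0 mod0p.
- move=> c d /graph_codeP graph_c /graph_codeP graph_d; apply/graph_codeP.
  by rewrite !poly_of_rowD graph_c graph_d mulrDr modpD.
- move=> g c _ /graph_codeP graph_c; apply/graph_codeP.
  by rewrite !poly_of_row_amul graph_c !modp_mul mulrCA.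
Qed.

Lemma trmulX_Fdual_graph w : (size w <= m)%N ->
  pair_mx (- trmulX m f w) w \in Fdual graph_code.
Proof.
move=> size_w; have size_Tw := size_trmulX f m_gt0 size_w.
rewrite inE; apply/forall_inP => c /graph_codeP graph_c.
rewrite dotw_sum_dotp sum_ord2 pair_mx_row0 ?size_polyN // pair_mx_row1 // graph_c.
by rewrite dotp_mulX_trmulX ?size_poly_of_row // dotpNr addNr.
Qed.

(* These are the entries of the first column of [M M^T = M^T M], [M] the
   companion matrix of [f]. *)
Lemma Fdual_graph_coef_eq : (1 < m)%N -> is_Acode f (Fdual graph_code) ->
  forall j, (j < m)%N -> f`_j * f`_0 = (j == 0%N)%:R - (j == m.-1)%:R * f`_1.
Proof.
move=> m_gt1 [_ _ dual_mul] j lt_jm.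
have size_X : (size ('X : {poly F}) <= m)%N by rewrite size_polyX.
have size_Xj : (size ('X^j : {poly F}) <= m)%N by rewrite size_polyXn.
have size_1 : (size (1 : {poly F})%R <= m)%N by rewrite size_poly1 ltnW.
have size_TXj : (size (- trmulX m f 'X^j) <= m)%N by rewrite size_polyN size_trmulX.
have dotp1 (v : {poly F}) : dotp 1 v = v`_0 by rewrite -(expr0 'X) dotpXnl.
have dotpX (v : {poly F}) : dotp 'X v = v`_1 by rewrite -(expr1 'X) dotpXnl.
have graph_1X : pair_mx 1 'X \in graph_code.
  by apply/graph_codeP; rewrite pair_mx_row0 // pair_mx_row1 // mulr1 (modf_small size_f).
have := dual_mul 'X _ size_X (trmulX_Fdual_graph size_Xj).
rewrite inE => /forall_inP /(_ _ graph_1X) /eqP.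
rewrite dotw_sum_dotp sum_ord2 !poly_of_row_amul.
rewrite (pair_mx_row0 _ size_TXj) (pair_mx_row1 _ size_Xj) pair_mx_row0 // pair_mx_row1 //.
rewrite dotp1 dotpX.
rewrite !(modf_mulX f_monic size_f m_gt0) // coefN coef_trmulX_last // dotpXnr //.
rewrite !(coefB, coefMX, coefZ, coefN) /= !coefXn ![(_ == j)%N]eq_sym.
by rewrite opprK sub0r addrC => /eqP; rewrite subr_eq0 => /eqP <-.
Qed.

End Codes.

Theorem mainTheorem13 (F : finFieldType) (m : nat) (f : {poly F})
  (hmonic : f \is monic) (hsize : size f = m.+1) (hm : (0 < m)%N) :
  (forall (l : nat) (C : {set 'M[F]_(l, m)}),
      is_Acode f C -> is_Acode f (Fdual C))
  <->
  [\/ m = 1%N,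
      m = 2%N /\ (exists a : F, f = 'X^2 + a *: 'X - 1)
    | (2 <= m)%N /\ (f = 'X^m + 1 \/ f = 'X^m - 1)].
Proof.
split=> [dual_closed | shape_f l C].
  have [m1 | m_gt1] : m = 1%N \/ (1 < m)%N by lia.
    exact: Or31.
  have graph_dual := dual_closed _ _ (graph_code_Acode hsize).
  have coef_eq := Fdual_graph_coef_eq hmonic hsize hm m_gt1 graph_dual.
  have [shape2 | binomial] := coef_eq_classify hmonic hsize m_gt1 coef_eq.
    exact: Or32 shape2.
  exact: Or33 (conj m_gt1 binomial).
case: shape_f => [m1 | [m2 [a f_def]] | [_ [f_def | f_def]]]; apply: (Fdual_Acode hsize).
- exact: adjointX_m1 hmonic hsize hm m1.
- have adj_X := adjointX_m2 hmonic hsize hm m2 f_def; exact: adj_X.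
- have sqrN1 : (-1 : F) * -1 = 1 by rewrite mulrNN mulr1.
  have f_binomial : f = 'X^m - (-1)%:P by rewrite polyCN opprK.
  have adj_X := adjointX_binomial hmonic hsize hm sqrN1 f_binomial; exact: adj_X.
- have f_binomial : f = 'X^m - 1%:P by rewrite polyC1.
  have adj_X := adjointX_binomial hmonic hsize hm (mulr1 1) f_binomial; exact: adj_X.
Qed.
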